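(* In the setting of the context, for each $s$ let $\sigma_{n,s}:\{1,\dots,n\}\to\{1,\dots,n\}$ be any permutation and define \[ Y^\ast_{ni}=\sum_{s=1}^{\mathcal{S}}\sum_{a\in\{0,1\}}Y_{\sigma_{n,s}(i)}(a,s)\mathbb{I}\{A_{ni}=a,\mathbb{S}(Z_i)=s\},\quad Z^\ast_{ni}=\sum_{s=1}^{\mathcal{S}}Z_{\sigma_{n,s}(i)}(s)\mathbb{I}\{\mathbb{S}(Z_i)=s\}, \] $X^\ast_{ni}=(Y^\ast_{ni},A_{ni},Z^\ast_{ni})$ and $\mathbf{X}^\ast_n=(X^\ast_{n1},\dots,X^\ast_{nn})'$. Then the joint distribution of $(\mathbf{X}^\ast_n,\mathbf{S}_n)$ equals that of $(\mathbf{X}_n,\mathbf{S}_n)$, and $\mathbf{X}_n$ and $\mathbf{X}^\ast_n$ are conditionally independent given $(\mathbf{A}_n,\mathbf{S}_n)$.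
   Context: Population: $W=(Y(0),Y(1),Z')'\in\mathbb{R}^{2+k}$; $\mathbf{Q}$ a family of distributions of $W$ each with a density w.r.t. a product of $\sigma$-finite measures $\mu_0\otimes\mu_1\otimes\mu_Z$ and $\mathbb{E}_Q[Y(a)^2]<\infty$; true $Q_0\in\mathbf{Q}$. Known measurable $\mathbb{S}:\mathbb{R}^k\to\{1,\dots,\mathcal{S}\}$, $\pi(s)\in(0,1)$. Sample $\mathbf{W}=\{W_i=(Y_i(0),Y_i(1),Z_i)\}_{i\in\mathbb{N}}$ i.i.d. $Q_0$; treatments $\mathbf{A}_n=(A_{n1},\dots,A_{nn})\in\{0,1\}^n$ for each $n$; $S_i=\mathbb{S}(Z_i)$, $\mathbf{S}_n=(S_1,\dots,S_n)$; observed $X_{ni}=(Y_{ni},A_{ni},Z_i)$ with $Y_{ni}=Y_i(1)A_{ni}+Y_i(0)(1-A_{ni})$, $\mathbf{X}_n=(X_{n1},\dots,X_{nn})'$; $(W_1,\dots,W_n)$ and $\mathbf{A}_n$ conditionally independent given $\mathbf{S}_n$; $\Pr(\mathbf{A}_n=\mathbf{a}\mid\mathbf{S}_n=\mathbf{s})$ known and not depending on $Q_0$; $N_n(1,s)/N_n(s)\to\pi(s)$ in probability. Coupling construction: $\mathbf{W}^\ast=\{W_i(s)=(Y_i(0,s),Y_i(1,s),Z_i(s)'):i\in\mathbb{N},s\in\{1,\dots,\mathcal{S}\}\}$ is a collection of random vectors on the same probability space, independent across $(i,s)$, with $W_i(s)$ distributed as $W$ conditional on $\mathbb{S}(Z)=s$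 under $Q_0$, and $\mathbf{W}^\ast$ independent of $\mathbf{W}$ and of all $\mathbf{A}_n$, $n\in\mathbb{N}$. *)

From HB Require Import structures.
From mathcomp Require Import all_boot all_order all_algebra all_fingroup.
From mathcomp Require Import all_classical all_reals all_analysis measurable_realfun.
Set Implicit Arguments.
Unset Strict Implicit.
Unset Printing Implicit Defensive.
Import Order.TTheory GRing.Theory Num.Theory.
Local Open Scope classical_set_scope.
Local Open Scope ring_scope.

Section prob_defs.
Context {d : measure_display} {T : measurableType d} {R : realType}.
Variable P : probability T R.

Definition preim_sys {d'} {U : measurableType d'} (X : T -> U) : set (set T) :=
  [set X @^-1` B | B in measurable].

Definition gen_sys {I : Type} (D : set I) (F : I -> set (set T)) : set (set T) :=
  <<s \bigcup_(i in D) F i >>.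

Definition mutual_indep {I : eqType} (D : pred I) (F : I -> set (set T)) :=
  forall (J : seq I) (E : I -> set T), uniq J -> all D J ->
  (forall j, j \in J -> F j (E j)) ->
  P (\big[setI/setT]_(j <- J) E j) = (\prod_(j <- J) P (E j))%E.

Definition indep2 (F G : set (set T)) :=
  forall E1 E2, F E1 -> G E2 -> P (E1 `&` E2) = (P E1 * P E2)%E.

(** conditional independence of [F] and [G] given a discrete (finitely valued)
    random element [C]: for every value [c] of [C],
    P(E1 E2 | C = c) = P(E1 | C = c) P(E2 | C = c), written multiplicatively
    (vacuous on null atoms). *)
Definition cond_indep_disc {U : Type} (F G : set (set T)) (C : T -> U) :=
  forall (c : U) E1 E2, F E1 -> G E2 ->
  (P (E1 `&` E2 `&` (C @^-1` [set c])) * P (C @^-1` [set c])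
   = P (E1 `&` (C @^-1` [set c])) * P (E2 `&` (C @^-1` [set c])))%E.

Definition same_law {d'} {U : measurableType d'} (X X' : T -> U) :=
  forall B, measurable B -> P (X @^-1` B) = P (X' @^-1` B).

End prob_defs.

(** A unit is W = (Y(0), Y(1), Z) : R * R * k.-tuple R, i.e. [w.1.1 = Y(0)],
    [w.1.2 = Y(1)], [w.2 = Z].  Sample indices are 0-based ([i : 'I_n] is the
    paper's unit i+1); strata are the natural numbers 1..Sc. *)
Section model_defs.
Context {d : measure_display} {T : measurableType d} {R : realType} {k : nat}.
Variables (Sf : k.-tuple R -> nat) (W : nat -> T -> R * R * k.-tuple R)
          (A : forall n, T -> n.-tuple bool).

Definition Svec n : T -> n.-tuple nat := fun t => [tuple Sf (W i t).2 | i < n].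

Definition Xobs n : T -> n.-tuple (R * bool * k.-tuple R) := fun t =>
  [tuple let a := tnth (A n t) i in
         ((W i t).1.2 * (a : nat)%:R + (W i t).1.1 * (1 - (a : nat)%:R), a,
          (W i t).2) | i < n].

Definition N1 n (s : nat) (t : T) : nat :=
  \sum_(i < n) (tnth (A n t) i && (Sf (W i t).2 == s)).
Definition Ns n (s : nat) (t : T) : nat :=
  \sum_(i < n) (Sf (W i t).2 == s).

(** coupled sample: [Wst i s] = W_i(s) = (Y_i(0,s), Y_i(1,s), Z_i(s)) *)
Variables (Sc : nat) (Wst : nat -> nat -> T -> R * R * k.-tuple R).

Definition Ycp (i s : nat) (a : bool) (t : T) : R :=
  if a then (Wst i s t).1.2 else (Wst i s t).1.1.

Definition Xstar n (sig : nat -> {perm 'I_n}) : T -> n.-tuple (R * bool * k.-tuple R) :=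
  fun t =>
  [tuple let a := tnth (A n t) i in let si := Sf (W i t).2 in
     (\sum_(1 <= s < Sc.+1) \sum_(b : bool)
         Ycp (sig s i) s b t * ((a == b) && (si == s) : nat)%:R,
      a,
      [tuple \sum_(1 <= s < Sc.+1)
               tnth (Wst (sig s i) s t).2 j * ((si == s) : nat)%:R | j < k])
   | i < n].

End model_defs.

From HB Require Import structures.
From mathcomp Require Import all_boot all_order all_algebra all_fingroup.
From mathcomp Require Import all_classical all_reals all_analysis measurable_realfun.
Import Order.TTheory GRing.Theory Num.Theory.
Local Open Scope classical_set_scope.
Local Open Scope ring_scope.

(* On the event {A_n = a, S_n = c}, X_n = h_a(W_1, ..., W_n) and X*_n = h_a(W*_c)
   for one measurable map h_a, where W*_c = (W_{sigma_{n,c_i}(i)}(c_i))_i.  The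
   pairs (sigma_{n,c_i}(i), c_i) are distinct, so the coordinates of W*_c are
   independent with laws W | S(Z) = c_i; as W* is also independent of (W, A_n),
   P((W_1, ..., W_n) in M, S_n = c) = P(W*_c in M, S_n = c) for product sets M,
   hence for all M by uniqueness of measures.  The conditional independence of W
   and A_n given S_n transfers this to the events {A_n = a, S_n = c}, which gives
   the equality of laws; the conditional independence of X_n and X*_n given
   (A_n, S_n) is again the independence of W* from (W, A_n). *)

Section tuple_box.
Context {X : Type} {n : nat}.

Definition tuple_box (D : 'I_n -> set X) : set (n.-tuple X) :=
  [set u | forall i, D i (tnth u i)].

Lemma tuple_box_set1 (u : n.-tuple X) :
  [set u] = tuple_box (fun i => [set tnth u i]).
Proof. by apply/seteqP; split=> [v -> //|v /= uv]; apply: eq_from_tnth. Qed.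

Lemma setI_tuple_box (D D' : 'I_n -> set X) :
  tuple_box D `&` tuple_box D' = tuple_box (fun i => D i `&` D' i).
Proof.
apply/seteqP; split=> [u [Du D'u] i|u DD'u]; first by split; [exact: Du|exact: D'u].
by split=> i; case: (DD'u i).
Qed.

Lemma preimage_tuple_box {T : Type} (f : 'I_n -> T -> X) (D : 'I_n -> set X) :
  (fun t => [tuple f i t | i < n]) @^-1` tuple_box D = \bigcap_i (f i @^-1` D i).
Proof.
apply/seteqP; split=> t /= Dft i; [move=> _|];
  by move: (Dft i); rewrite ?tnth_mktuple; apply.
Qed.

End tuple_box.

Lemma measurable_preimage {d1 d2} {X : measurableType d1} {Y : measurableType d2}
    {f : X -> Y} {B : set Y} :
  measurable_fun setT f -> measurable B -> measurable (f @^-1` B).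
Proof. by move=> mf mB; rewrite -[X in measurable X]setTI; exact: mf. Qed.

Lemma measurable_fun_g_sigma {d'} {T : pointedType} {Y : measurableType d'}
    (G : set (set T)) (f : T -> Y) :
  (forall B, measurable B -> G (f @^-1` B)) ->
  measurable_fun (setT : set (g_sigma_algebraType G)) f.
Proof. by move=> Gf _ B mB; rewrite setTI; apply: sub_sigma_algebra; exact: Gf. Qed.

Lemma preimageI_on {X Y : Type} (f g : X -> Y) (E : set X) (B : set Y) :
  (forall x, E x -> f x = g x) -> f @^-1` B `&` E = g @^-1` B `&` E.
Proof.
move=> fg; apply/seteqP; split=> x [Bx Ex]; split=> //.
  by rewrite /= -fg.
by rewrite /= fg.
Qed.

Section measurable_tuple_box.
Context {d : measure_display} {X : measurableType d}.

Lemma measurable_tuple_box {n} (D : 'I_n -> set X) :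
  (forall i, measurable (D i)) -> measurable (tuple_box D).
Proof.
move=> mD.
have -> : tuple_box D = \bigcap_(i in [set: 'I_n]) ((@tnth n X)^~ i @^-1` D i).
  by apply/seteqP; split=> [u Du i _|u Du i]; exact: Du.
apply: fin_bigcap_measurable; first exact: finite_finset.
by move=> i _; exact: measurable_preimage (measurable_tnth i) (mD i).
Qed.

Lemma measurable_tuple_set1 {n} (u : n.-tuple X) :
  (forall x : X, measurable [set x]) -> measurable [set u].
Proof. by move=> mX1; rewrite tuple_box_set1; exact: measurable_tuple_box. Qed.

Variable n : nat.

Definition measurable_boxes : set (set (n.-tuple X)) :=
  [set tuple_box D | D in [set D | forall i, measurable (D i)]].

Lemma measurable_boxes_setI : setI_closed measurable_boxes.
Proof.
move=> _ _ [D mD <-] [D' mD' <-]; rewrite setI_tuple_box.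
by exists (fun i => D i `&` D' i) => // i; exact: measurableI.
Qed.

Lemma measurable_boxesT : measurable_boxes setT.
Proof. by exists (fun=> setT) => //; apply/seteqP; split. Qed.

Lemma tuple_measurable_boxes : measurable = <<s measurable_boxes >>.
Proof.
apply/seteqP; split; last first.
  apply: smallest_sub; first exact: sigma_algebra_measurable.
  by move=> _ [D mD <-]; exact: measurable_tuple_box.
apply: smallest_sub; first exact: smallest_sigma_algebra.
rewrite -bigcup_seq => _ [i _ [Y mY <-]]; apply: sub_sigma_algebra.
exists (fun j => if j == i then Y else setT); first by move=> j; case: eqP.
rewrite setTI; apply/seteqP; split=> u /=; first by move/(_ i); rewrite eqxx.
by move=> Yu j; case: eqP => // ->.
Qed.

End measurable_tuple_box.

Section keyed_rectangles.
Context {d1 d2 : measure_display} {X : measurableType d1} {C : measurableType d2}.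
Context {K : Type} (key : X -> K).

(* Fixing the key (below, the treatment vector) is what makes the probabilities
   of these rectangles computable. *)
Definition keyed_rectangles : set (set (X * C)) :=
  [set Z | Z = setT \/ exists (M : set X) (a : K) (c : C),
     measurable M /\ Z = (M `&` key @^-1` [set a]) `*` [set c]].

Lemma keyed_rectangles_setI : setI_closed keyed_rectangles.
Proof.
move=> _ Z' [->|[M [a [c [mM ->]]]]]; first by rewrite setTI.
move=> [->|[M' [a' [c' [mM' ->]]]]]; first by rewrite setIT; right; exists M, a, c.
right; have [[<- <-]|aa'cc'] := pselect (a = a' /\ c = c').
  exists (M `&` M'), a, c; split; first exact: measurableI.
  by rewrite -setXI setIACA setIid setIid.
exists set0, a, c; split => //; rewrite set0I set0X.
apply/seteqP; split=> // -[x y] [[[_ /= kx] /= yc] [[_ /= kx'] /= yc']].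
by apply: aa'cc'; rewrite -kx -kx' -yc -yc'.
Qed.

Lemma measurable_keyed_rectangles :
  countable [set: K] -> countable [set: C] ->
  (forall a, measurable (key @^-1` [set a])) -> (forall c : C, measurable [set c]) ->
  measurable = <<s keyed_rectangles >>.
Proof.
move=> cK cC mkey mC1; apply/seteqP; split; last first.
  apply: smallest_sub; first exact: sigma_algebra_measurable.
  move=> _ [->|[M [a [c [mM ->]]]]]; first exact: measurableT.
  by apply: measurableX => //; exact: measurableI.
rewrite measurable_prod_measurableType; apply: smallest_sub.
  exact: smallest_sigma_algebra.
move=> _ [M mM [N _ <-]].
have -> : M `*` N =
    \bigcup_a \bigcup_c ((M `&` key @^-1` [set a]) `*` ([set c] `&` N)).
  apply/seteqP; split=> [[x y] [/= Mx Ny]|[x y] [a _ [c _ [/= [Mx _] [_ Ny]]]]] //.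
  by exists (key x) => //; exists y.
pose TG := g_sigma_algebraType keyed_rectangles.
apply: (countable_bigcupT_measurable (T := TG)) => // a.
apply: (countable_bigcupT_measurable (T := TG)) => // c.
have [Nc|Nc] := pselect (N c).
  have -> : [set c] `&` N = [set c] by apply/setIidl => _ ->.
  by apply: sub_sigma_algebra; right; exists M, a, c.
have -> : [set c] `&` N = set0 by apply/seteqP; split=> // _ [-> ].
by rewrite setX0; exact: measurable0.
Qed.

End keyed_rectangles.

Lemma fin_num_mulIf {R : realDomainType} {x y r : \bar R} :
  x \is a fin_num -> y \is a fin_num -> r \is a fin_num -> r != 0%E ->
  (x * r = y * r)%E -> x = y.
Proof.
case: x y r => [x||] [y||] [r||] //= _ _ _; rewrite eqe => r0.
rewrite -!EFinM => xy; congr EFin; apply: (mulIf r0); exact: EFin_inj xy.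
Qed.

Section probability_lemmas.
Context {d : measure_display} {T : measurableType d} {R : realType}.
Context {P : probability T R}.

Lemma measure_preimageI_unique {d'} {U : measurableType d'} {G : set (set U)}
    {X Y : T -> U} {E : set T} :
  measurable = <<s G >> -> setI_closed G -> G setT ->
  measurable_fun setT X -> measurable_fun setT Y -> measurable E ->
  (forall B, G B -> P (X @^-1` B `&` E) = P (Y @^-1` B `&` E)) ->
  forall B, measurable B -> P (X @^-1` B `&` E) = P (Y @^-1` B `&` E).
Proof.
move=> mG GI GT mX mY mE XY B mB.
apply: (measure_unique G (fun=> setT) mG GI (fun=> GT) _
  (pushforward (mrestr P mE) X) (pushforward (mrestr P mE) Y) XY _ _ mB) => //.
  by apply/seteqP; split=> // u _; exists 0%N.
move=> _; change (P (X @^-1` setT `&` E) < +oo)%E; rewrite preimage_setT setTI.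
by rewrite (le_lt_trans (probability_le1 P mE)) ?ltry.
Qed.

Lemma same_law_generated {d'} {U : measurableType d'} {G : set (set U)}
    {X Y : T -> U} :
  measurable = <<s G >> -> setI_closed G -> G setT ->
  measurable_fun setT X -> measurable_fun setT Y ->
  (forall B, G B -> P (X @^-1` B) = P (Y @^-1` B)) -> same_law P X Y.
Proof.
move=> mG GI GT mX mY XY B mB; rewrite -(setIT (X @^-1` B)) -(setIT (Y @^-1` B)).
by apply: (measure_preimageI_unique mG) => // C GC; rewrite !setIT; exact: XY.
Qed.

Lemma mutual_indep_bigcap {I : eqType} {D : pred I} {F : I -> set (set T)} {m}
    (pr : 'I_m -> I) (E : 'I_m -> set T) :
  mutual_indep P D F -> injective pr -> (forall i, D (pr i)) ->
  (forall i, F (pr i) (E i)) ->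
  P (\bigcap_i E i) = (\prod_(i < m) P (E i))%E.
Proof.
move=> indepF injpr Dpr FE.
pose E' x := if [pick i | pr i == x] is Some i then E i else setT.
have E'E i : E' (pr i) = E i.
  by rewrite /E'; case: pickP => [j /eqP/injpr -> //|/(_ i)]; rewrite eqxx.
have -> : \bigcap_i E i = \big[setI/setT]_(x <- map pr (index_enum 'I_m)) E' x.
  rewrite big_map -bigcap_seq; apply/seteqP; split=> t Et i _.
    by rewrite E'E; exact: Et.
  by rewrite -E'E; apply: Et; rewrite /= mem_index_enum.
have -> : (\prod_(i < m) P (E i) = \prod_(x <- map pr (index_enum 'I_m)) P (E' x))%E.
  by rewrite big_map; apply: eq_bigr => i _; rewrite E'E.
apply: indepF; first by rewrite map_inj_uniq // index_enum_uniq.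
  by apply/allP => _ /mapP[i _ ->].
by move=> _ /mapP[i _ ->]; rewrite E'E.
Qed.

End probability_lemmas.

Section coupling.
Context {R : realType} {d : measure_display} {T : measurableType d}.
Context {k Sc : nat} {Sf : k.-tuple R -> nat} {W : nat -> T -> R * R * k.-tuple R}.
Context {A : forall n, T -> n.-tuple bool} {Wst : nat -> nat -> T -> R * R * k.-tuple R}.

Local Notation U := (R * R * k.-tuple R)%type.
Local Notation V := (R * bool * k.-tuple R)%type.

Definition observe (b : bool) (w : U) : V := (if b then w.1.2 else w.1.1, b, w.2).

Lemma measurable_observe b : measurable_fun setT (observe b).
Proof.
apply/measurable_fun_pairP; split; last exact: measurable_snd.
apply/measurable_fun_pairP; split; last exact: measurable_cst.
case: b; first exact: (measurableT_comp measurable_snd measurable_fst).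
exact: (measurableT_comp measurable_fst measurable_fst).
Qed.

Definition observe_tuple {n} (a : n.-tuple bool) (u : n.-tuple U) : n.-tuple V :=
  [tuple observe (tnth a i) (tnth u i) | i < n].

Lemma measurable_observe_tuple {n} (a : n.-tuple bool) :
  measurable_fun setT (observe_tuple a).
Proof.
apply/measurable_fun_tnthP => i.
have -> : (@tnth n V)^~ i \o observe_tuple a = observe (tnth a i) \o (@tnth n U)^~ i.
  by apply/funext => u /=; rewrite tnth_mktuple.
exact: measurableT_comp (measurable_observe _) (measurable_tnth i).
Qed.

Definition treatments {n} (x : n.-tuple V) : n.-tuple bool :=
  [tuple (tnth x i).1.2 | i < n].

Lemma treatments_observe {n} (a : n.-tuple bool) u : treatments (observe_tuple a u) = a.
Proof. by apply: eq_from_tnth => i; rewrite !tnth_mktuple. Qed.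

Lemma measurable_treatments_set1 {n} (a : n.-tuple bool) :
  measurable (treatments @^-1` [set a]).
Proof.
have -> : treatments @^-1` [set a] = tuple_box (fun i => [set v : V | v.1.2 = tnth a i]).
  apply/seteqP; split=> [x <- i|x xa]; first by rewrite /= tnth_mktuple.
  by apply: eq_from_tnth => i; rewrite tnth_mktuple; exact: xa.
apply: measurable_tuple_box => i.
exact: measurable_preimage (measurableT_comp measurable_snd measurable_fst)
  (I : measurable [set tnth a i]).
Qed.

Lemma measurable_treatment_rectangles n :
  measurable = <<s @keyed_rectangles _ _ _ (n.-tuple nat) _ (@treatments n) >>.
Proof.
apply: measurable_keyed_rectangles; first exact: countableP [set: n.-tuple bool].
- exact: countableP [set: n.-tuple nat].
- exact: measurable_treatments_set1.
- by move=> c; apply: measurable_tuple_set1.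
Qed.

Definition W_tuple n (t : T) : n.-tuple U := [tuple W i t | i < n].

(* The units X*_n draws on when S_n = c: (W_{sigma_{n,c_i}(i)}(c_i))_i. *)
Definition Wst_tuple {n} (sig : nat -> {perm 'I_n}) (c : n.-tuple nat) (t : T) :
    n.-tuple U :=
  [tuple Wst (sig (tnth c i) i) (tnth c i) t | i < n].

Lemma XobsE n t : Xobs W A n t = observe_tuple (A n t) (W_tuple n t).
Proof.
apply: eq_from_tnth => i; rewrite !tnth_mktuple /observe.
case: (tnth (A n t) i) => /=; congr (_, _, _).
  by rewrite mulr1n mulr1 subrr mulr0 addr0.
by rewrite mulr0n mulr0 subr0 mulr1 add0r.
Qed.

Hypothesis SfR : forall z, (1 <= Sf z <= Sc)%N.

Lemma sum_strata_indicator (F : nat -> R) (c : nat) : (1 <= c <= Sc)%N ->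
  \sum_(1 <= s < Sc.+1) F s * ((c == s) : nat)%:R = F c.
Proof.
move=> cS; rewrite (bigD1_seq c) ?mem_index_iota ?iota_uniq //= eqxx mulr1.
by rewrite big1_seq ?addr0 // => s /andP[sc _]; rewrite eq_sym (negbTE sc) mulr0.
Qed.

Lemma XstarE n sig t :
  Xstar Sf W A Sc Wst sig t = observe_tuple (A n t) (Wst_tuple sig (Svec Sf W n t) t).
Proof.
apply: eq_from_tnth => i; rewrite !tnth_mktuple /observe; congr (_, _, _).
  rewrite -(sum_strata_indicator (fun s => if tnth (A n t) i then (Wst (sig s i) s t).1.2
                                           else (Wst (sig s i) s t).1.1) _ (SfR _)).
  apply: eq_bigr => s _; rewrite big_bool /= /Ycp.
  by case: (tnth (A n t) i) => /=; rewrite ?mulr0 ?addr0 ?add0r.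
apply: eq_from_tnth => j; rewrite tnth_mktuple.
exact: (sum_strata_indicator (fun s => tnth (Wst (sig s i) s t).2 j) _ (SfR _)).
Qed.

Lemma treatments_Xobs n t : treatments (Xobs W A n t) = A n t.
Proof. by rewrite XobsE treatments_observe. Qed.

Lemma treatments_Xstar {n} (sig : nat -> {perm 'I_n}) t :
  treatments (Xstar Sf W A Sc Wst sig t) = A n t.
Proof. by rewrite XstarE treatments_observe. Qed.

Definition strata_event {n} (c : n.-tuple nat) : set T := Svec Sf W n @^-1` [set c].

Definition design_event {n} (a : n.-tuple bool) (c : n.-tuple nat) : set T :=
  A n @^-1` [set a] `&` strata_event c.

Lemma strata_eventE {n} (c : n.-tuple nat) :
  strata_event c = \bigcap_(i in [set: 'I_n]) W i @^-1` [set w | Sf w.2 = tnth c i].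
Proof.
apply/seteqP; split=> t; first by move=> <- i _; rewrite /Svec tnth_mktuple.
by move=> Sct; apply: eq_from_tnth => i; rewrite tnth_mktuple; exact: Sct.
Qed.

Lemma strata_event_out {n} (c : n.-tuple nat) :
  ~~ [forall i, 1 <= tnth c i <= Sc]%N -> strata_event c = set0.
Proof.
move=> /forallPn[i ci]; apply/seteqP; split=> // t.
by rewrite strata_eventE => /(_ i I) /= Sci; rewrite -Sci SfR in ci.
Qed.

Lemma preimage_Xobs_design {n} (a : n.-tuple bool) c (B : set (n.-tuple V)) :
  Xobs W A n @^-1` B `&` design_event a c =
  W_tuple n @^-1` (observe_tuple a @^-1` B) `&` design_event a c.
Proof. by apply: preimageI_on => t [/= <- _]; exact: XobsE. Qed.

Lemma preimage_Xstar_design {n} sig (a : n.-tuple bool) c (B : set (n.-tuple V)) :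
  Xstar Sf W A Sc Wst sig @^-1` B `&` design_event a c =
  Wst_tuple sig c @^-1` (observe_tuple a @^-1` B) `&` design_event a c.
Proof. by apply: preimageI_on => t [/= <- <-]; exact: XstarE. Qed.

Lemma preimage_treatment_rectangle {n} (X : T -> n.-tuple V) M a c :
  (forall t, treatments (X t) = A n t) ->
  (fun t => (X t, Svec Sf W n t)) @^-1` ((M `&` treatments @^-1` [set a]) `*` [set c]) =
  X @^-1` M `&` design_event a c.
Proof.
move=> tX; apply/seteqP; split=> t /=; rewrite tX.
  by move=> [[Mx Aa] Sct]; split=> //; split.
by move=> [Mx [Aa Sct]]; split=> //; split.
Qed.

Hypothesis mSf : measurable_fun setT Sf.
Hypothesis mW : forall i, measurable_fun setT (W i).
Hypothesis mA : forall n, measurable_fun setT (A n).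
Hypothesis mWst : forall i s, measurable_fun setT (Wst i s).

Definition sample_treatment_sets : set (set T) :=
  \bigcup_(x in setT) (fun x : nat + nat =>
    match x with inl i => preim_sys (W i) | inr n => preim_sys (A n) end) x.

Definition coupled_sets : set (set T) :=
  \bigcup_(p in [set p : nat * nat | (1 <= p.2 <= Sc)%N])
    (fun p => preim_sys (Wst p.1 p.2)) p.

Local Notation TWA := (g_sigma_algebraType sample_treatment_sets).
Local Notation TWst := (g_sigma_algebraType coupled_sets).

Lemma measurable_sub_WA {E : set T} : (measurable : set (set TWA)) E -> measurable E.
Proof.
apply: smallest_sub; first exact: sigma_algebra_measurable.
move=> _ [[i|n] _ [B mB <-]]; first exact: measurable_preimage (mW i) mB.
exact: measurable_preimage (mA n) mB.
Qed.

Lemma measurable_W_tuple_WA n : measurable_fun (setT : set TWA) (W_tuple n).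
Proof.
apply/measurable_fun_tnthP => i; apply: measurable_fun_g_sigma => B mB.
exists (inl (nat_of_ord i)) => //; exists B => //.
by apply/seteqP; split=> t; rewrite /= tnth_mktuple.
Qed.

Lemma measurable_strata_event_WA {n} (c : n.-tuple nat) :
  (measurable : set (set TWA)) (strata_event c).
Proof.
have mS : measurable_fun (setT : set TWA) (Svec Sf W n).
  apply/measurable_fun_tnthP => i; apply: measurable_fun_g_sigma => B mB.
  exists (inl (nat_of_ord i)) => //; exists ((fun w : U => Sf w.2) @^-1` B).
    exact: measurable_preimage (measurableT_comp mSf measurable_snd) mB.
  by apply/seteqP; split=> t; rewrite /= tnth_mktuple.
by apply: measurable_preimage mS _; exact: measurable_tuple_set1.
Qed.

Lemma measurable_design_event_WA {n} (a : n.-tuple bool) c :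
  (measurable : set (set TWA)) (design_event a c).
Proof.
have mA' : measurable_fun (setT : set TWA) (A n).
  by apply: measurable_fun_g_sigma => B mB; exists (inr n) => //; exists B.
rewrite /design_event; apply: measurableI; last exact: measurable_strata_event_WA.
by apply: measurable_preimage mA' _; exact: measurable_tuple_set1.
Qed.

Lemma measurable_Wst_tuple_Wst {n} (sig : nat -> {perm 'I_n}) c :
  (forall i, 1 <= tnth c i <= Sc)%N -> measurable_fun (setT : set TWst) (Wst_tuple sig c).
Proof.
move=> cS; apply/measurable_fun_tnthP => i; apply: measurable_fun_g_sigma => B mB.
exists (nat_of_ord (sig (tnth c i) i), tnth c i); first exact: cS.
by exists B => //; apply/seteqP; split=> t; rewrite /= tnth_mktuple.
Qed.

Lemma measurable_W_tuple n : measurable_fun setT (W_tuple n).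
Proof.
apply/measurable_fun_tnthP => i.
by rewrite (_ : _ \o _ = W i) //; apply/funext => t /=; rewrite tnth_mktuple.
Qed.

Lemma measurable_Wst_tuple {n} (sig : nat -> {perm 'I_n}) c :
  measurable_fun setT (Wst_tuple sig c).
Proof.
apply/measurable_fun_tnthP => i.
rewrite (_ : _ \o _ = Wst (sig (tnth c i) i) (tnth c i)) //.
by apply/funext => t /=; rewrite tnth_mktuple.
Qed.

Lemma measurable_Xobs_design {n} (a : n.-tuple bool) c M : measurable M ->
  measurable (Xobs W A n @^-1` M `&` design_event a c).
Proof.
move=> mM; rewrite preimage_Xobs_design; apply: measurableI.
  exact: measurable_preimage (measurable_W_tuple n)
    (measurable_preimage (measurable_observe_tuple a) mM).
exact: measurable_sub_WA (measurable_design_event_WA a c).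
Qed.

Lemma measurable_Xstar_design {n} (sig : nat -> {perm 'I_n}) (a : n.-tuple bool) c M :
  measurable M -> measurable (Xstar Sf W A Sc Wst sig @^-1` M `&` design_event a c).
Proof.
move=> mM; rewrite preimage_Xstar_design; apply: measurableI.
  exact: measurable_preimage (measurable_Wst_tuple sig c)
    (measurable_preimage (measurable_observe_tuple a) mM).
exact: measurable_sub_WA (measurable_design_event_WA a c).
Qed.

Lemma measurable_pair_Svec {n} {X : T -> n.-tuple V} :
  (forall t, treatments (X t) = A n t) ->
  (forall (a : n.-tuple bool) (c : n.-tuple nat) M,
     measurable M -> measurable (X @^-1` M `&` design_event a c)) ->
  measurable_fun setT (fun t => (X t, Svec Sf W n t)).
Proof.
move=> tX mX; apply: (measurability _ (measurable_treatment_rectangles n)).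
move=> _ [_ [->|[M [a [c [mM ->]]]]] <-].
  by rewrite preimage_setT setTI; exact: measurableT.
by rewrite setTI preimage_treatment_rectangle //; exact: mX.
Qed.

Lemma measurable_stratum (s : nat) : measurable [set w : U | Sf w.2 = s].
Proof.
exact: measurable_preimage (measurableT_comp mSf measurable_snd) (I : measurable [set s]).
Qed.

Context {P : probability T R}.
Hypothesis indepW : mutual_indep P predT (fun i => preim_sys (W i)).
Hypothesis lawW : forall i, same_law P (W i) (W 0%N).
Hypothesis condA : forall n, cond_indep_disc P (preim_sys (fun t => [tuple W i t | i < n]))
                                             (preim_sys (A n)) (Svec Sf W n).
Hypothesis indepWst : mutual_indep P (fun p : nat * nat => (1 <= p.2 <= Sc)%N)
                                     (fun p => preim_sys (Wst p.1 p.2)).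
Hypothesis lawWst : forall i s, (1 <= s <= Sc)%N -> forall B, measurable B ->
  (P (Wst i s @^-1` B) * P ((fun t => Sf (W 0%N t).2) @^-1` [set s])
   = P (W 0%N @^-1` B `&` (fun t => Sf (W 0%N t).2) @^-1` [set s]))%E.
Hypothesis indepWstWA : indep2 P
  (gen_sys [set p : nat * nat | (1 <= p.2 <= Sc)%N] (fun p => preim_sys (Wst p.1 p.2)))
  (gen_sys setT (fun x : nat + nat =>
     match x with inl i => preim_sys (W i) | inr n => preim_sys (A n) end)).

Lemma P_bigcap_W n (D : 'I_n -> set U) : (forall i, measurable (D i)) ->
  P (\bigcap_(i in [set: 'I_n]) W i @^-1` D i) = (\prod_(i < n) P (W 0%N @^-1` D i))%E.
Proof.
move=> mD; rewrite (mutual_indep_bigcap val _ indepW val_inj) //.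
  by apply: eq_bigr => i _; exact: lawW.
by move=> i; exists (D i).
Qed.

Lemma P_bigcap_Wst {n} (sig : nat -> {perm 'I_n}) c (D : 'I_n -> set U) :
  (forall i, 1 <= tnth c i <= Sc)%N -> (forall i, measurable (D i)) ->
  P (\bigcap_(i in [set: 'I_n]) Wst (sig (tnth c i) i) (tnth c i) @^-1` D i) =
  (\prod_(i < n) P (Wst (sig (tnth c i) i) (tnth c i) @^-1` D i))%E.
Proof.
move=> cS mD.
apply: (mutual_indep_bigcap (fun i => (val (sig (tnth c i) i), tnth c i)) _ indepWst).
- by move=> i j [/val_inj + cij]; rewrite cij; exact: perm_inj.
- exact: cS.
- by move=> i; exists (D i).
Qed.

Lemma P_strata_event {n} (c : n.-tuple nat) :
  P (strata_event c) = (\prod_(i < n) P (W 0%N @^-1` [set w | Sf w.2 = tnth c i]))%E.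
Proof. by rewrite strata_eventE; apply: P_bigcap_W => i; exact: measurable_stratum. Qed.

Lemma P_Wst_tupleI {n} (sig : nat -> {perm 'I_n}) c N (E : set T) :
  (forall i, 1 <= tnth c i <= Sc)%N -> measurable N -> (measurable : set (set TWA)) E ->
  P (Wst_tuple sig c @^-1` N `&` E) = (P (Wst_tuple sig c @^-1` N) * P E)%E.
Proof.
move=> cS mN mE; apply: indepWstWA mE.
exact: measurable_preimage (measurable_Wst_tuple_Wst sig c cS) mN.
Qed.

Lemma W_tuple_strata_law {n} (sig : nat -> {perm 'I_n}) c M : measurable M ->
  P (W_tuple n @^-1` M `&` strata_event c) = P (Wst_tuple sig c @^-1` M `&` strata_event c).
Proof.
move=> mM; have [/forallP cS|cS] := boolP [forall i, 1 <= tnth c i <= Sc]%N; last first.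
  by rewrite strata_event_out // !setI0.
have mS := measurable_sub_WA (measurable_strata_event_WA c).
apply: (measure_preimageI_unique (tuple_measurable_boxes n) (measurable_boxes_setI n)
  (measurable_boxesT n) (measurable_W_tuple n) (measurable_Wst_tuple sig c) mS) => //.
move=> _ [D mD <-].
rewrite (P_Wst_tupleI sig c _ _ cS (measurable_tuple_box D mD) (measurable_strata_event_WA c)).
rewrite /W_tuple /Wst_tuple !preimage_tuple_box P_bigcap_Wst // P_strata_event -big_split /=.
have -> : (\bigcap_(i in [set: 'I_n]) W i @^-1` D i) `&` strata_event c =
    \bigcap_(i in [set: 'I_n]) W i @^-1` (D i `&` [set w | Sf w.2 = tnth c i]).
  rewrite strata_eventE; apply/seteqP; split=> [t [Dt St] i _|t DSt].
    by split; [exact: Dt|exact: St].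
  by split=> i _; case: (DSt i I).
rewrite P_bigcap_W; last by move=> i; apply: measurableI => //; exact: measurable_stratum.
by apply: eq_bigr => i _; apply/esym; exact: lawWst (cS i) _ (mD i).
Qed.

Lemma Xobs_Xstar_design n (sig : nat -> {perm 'I_n}) (a : n.-tuple bool)
    (c : n.-tuple nat) (M : set (n.-tuple V)) : measurable M ->
  P (Xobs W A n @^-1` M `&` design_event a c) =
  P (Xstar Sf W A Sc Wst sig @^-1` M `&` design_event a c).
Proof.
move=> mM; rewrite preimage_Xobs_design preimage_Xstar_design.
have [/forallP cS|cS] := boolP [forall i, 1 <= tnth c i <= Sc]%N; last first.
  by rewrite /design_event strata_event_out // !setI0.
set N := observe_tuple a @^-1` M.
have mN : measurable N := measurable_preimage (measurable_observe_tuple a) mM.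
have mWN := measurable_preimage (measurable_W_tuple n) mN.
have mWstN := measurable_preimage (measurable_Wst_tuple sig c) mN.
have mD := measurable_sub_WA (measurable_design_event_WA a c).
have mWND := measurableI _ _ mWN mD.
have mS := measurable_sub_WA (measurable_strata_event_WA c).
rewrite P_Wst_tupleI //; last exact: measurable_design_event_WA.
have := condA n c _ _ (ex_intro2 _ _ N mN erefl)
  (ex_intro2 _ _ [set a] (measurable_tuple_set1 a (fun _ => I)) erefl).
rewrite -/(W_tuple n) -/(strata_event c) -setIA -/(design_event a c).
rewrite (W_tuple_strata_law sig) // P_Wst_tupleI //; last exact: measurable_strata_event_WA.
move=> condN; have [PS0|PS0] := eqVneq (P (strata_event c)) 0%E.
  have null E : measurable E -> E `<=` strata_event c -> P E = 0%E.
    by move=> mE ES; apply/eqP; rewrite -measure_le0 -PS0 le_measure ?inE.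
  rewrite (null (design_event a c) mD (@subIsetr _ _ _)) mule0.
  by rewrite null // => t [_ []].
apply: (fin_num_mulIf _ _ _ PS0); rewrite ?fin_numM ?fin_num_measure //.
by rewrite condN muleAC.
Qed.

Lemma same_law_Xstar_Xobs n (sig : nat -> {perm 'I_n}) :
  same_law P (fun t => (Xstar Sf W A Sc Wst sig t, Svec Sf W n t))
             (fun t => (Xobs W A n t, Svec Sf W n t)).
Proof.
apply: (same_law_generated (measurable_treatment_rectangles n)
  (keyed_rectangles_setI _) (or_introl erefl)).
- exact: measurable_pair_Svec (treatments_Xstar sig) (measurable_Xstar_design sig).
- exact: measurable_pair_Svec (treatments_Xobs n) measurable_Xobs_design.
move=> _ [->|[M [a [c [mM ->]]]]]; first by rewrite !preimage_setT.
rewrite (preimage_treatment_rectangle _ M a c (treatments_Xstar sig)).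
rewrite (preimage_treatment_rectangle _ M a c (treatments_Xobs n)).
by symmetry; exact: Xobs_Xstar_design.
Qed.

Lemma cond_indep_Xobs_Xstar n (sig : nat -> {perm 'I_n}) :
  cond_indep_disc P (preim_sys (Xobs W A n)) (preim_sys (Xstar Sf W A Sc Wst sig))
                    (fun t => (A n t, Svec Sf W n t)).
Proof.
move=> [a c] _ _ [B1 mB1 <-] [B2 mB2 <-].
have -> : (fun t => (A n t, Svec Sf W n t)) @^-1` [set (a, c)] = design_event a c.
  by apply/seteqP; split=> t /=; [case=> <- <-|case=> /= -> ->].
have [/forallP cS|cS] := boolP [forall i, 1 <= tnth c i <= Sc]%N; last first.
  by rewrite /design_event strata_event_out // !setI0 measure0 !mule0.
have mD := measurable_design_event_WA a c.
set X1 := Xobs W A n @^-1` B1; set X2 := Xstar Sf W A Sc Wst sig @^-1` B2.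
set F := Wst_tuple sig c @^-1` (observe_tuple a @^-1` B2).
set G := W_tuple n @^-1` (observe_tuple a @^-1` B1) `&` design_event a c.
have mG : (measurable : set (set TWA)) G.
  apply: measurableI mD; exact: measurable_preimage (measurable_W_tuple_WA n)
    (measurable_preimage (measurable_observe_tuple a) mB1).
have mN2 := measurable_preimage (measurable_observe_tuple a) mB2.
have XD1 : X1 `&` design_event a c = G by exact: preimage_Xobs_design.
have XD2 : X2 `&` design_event a c = F `&` design_event a c.
  exact: preimage_Xstar_design.
have XD12 : X1 `&` X2 `&` design_event a c = F `&` G.
  apply/seteqP; split=> t.
    move=> [[X1t X2t] Dt]; split; last by rewrite -XD1.
    by have [] : (F `&` design_event a c) t by rewrite -XD2.
  move=> [Ft Gt]; have [X1t Dt] : (X1 `&` design_event a c) t by rewrite XD1.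
  by have [] : (X2 `&` design_event a c) t by rewrite XD2.
rewrite XD12 XD1 XD2 (P_Wst_tupleI sig c _ _ cS mN2 mG).
by rewrite (P_Wst_tupleI sig c _ _ cS mN2 mD) -muleA muleCA.
Qed.

End coupling.

Theorem lemma7 (R : realType) (d : measure_display) (T : measurableType d)
  (P : probability T R) (k Sc : nat) (Sf : k.-tuple R -> nat) (pi : nat -> R)
  (W : nat -> T -> R * R * k.-tuple R) (A : forall n, T -> n.-tuple bool)
  (Wst : nat -> nat -> T -> R * R * k.-tuple R) :
  (* Q0 (the law of W_i) belongs to the model Q: it has a density w.r.t. a
     product of sigma-finite measures ... *)
  (exists (mu0 mu1 : {measure set R -> \bar R})
          (muZ : {measure set (k.-tuple R) -> \bar R})
          (f : R * R * k.-tuple R -> \bar R),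
      sigma_finite setT mu0 /\ sigma_finite setT mu1 /\ sigma_finite setT muZ /\
      measurable_fun setT f /\ (forall x, 0 <= f x)%E /\
      forall B, measurable B ->
        P (W 0%N @^-1` B) = (\int[(mu0 \x mu1) \x muZ]_(x in B) f x)%E) ->
  (* ... and E[Y(0)^2], E[Y(1)^2] are finite *)
  (\int[P]_t (((W 0%N t).1.1) ^+ 2)%:E < +oo)%E ->
  (\int[P]_t (((W 0%N t).1.2) ^+ 2)%:E < +oo)%E ->
  (* the known stratification function and target proportions *)
  measurable_fun setT Sf ->
  (forall z, (1 <= Sf z <= Sc)%N) ->
  (forall s, (1 <= s <= Sc)%N -> 0 < pi s < 1) ->
  (* W_1, W_2, ... i.i.d. with law Q0 *)
  (forall i, measurable_fun setT (W i)) ->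
  mutual_indep P predT (fun i => preim_sys (W i)) ->
  (forall i, same_law P (W i) (W 0%N)) ->
  (* treatment vectors A_n, conditionally independent of (W_1..W_n) given S_n *)
  (forall n, measurable_fun setT (A n)) ->
  (forall n, cond_indep_disc P (preim_sys (fun t => [tuple W i t | i < n]))
                               (preim_sys (A n)) (Svec Sf W n)) ->
  (* N_n(1,s)/N_n(s) -> pi(s) in probability *)
  (forall s, (1 <= s <= Sc)%N -> forall eps : R, 0 < eps ->
     (fun n => P [set t | eps < `| (N1 Sf W A n s t)%:R / (Ns Sf W n s t)%:R - pi s |])
       @ \oo --> 0%E) ->
  (* coupling: W_i(s) independent across (i,s), with W_i(s) ~ W | S(Z) = s under Q0 *)
  (forall i s, measurable_fun setT (Wst i s)) ->
  mutual_indep P (fun p : nat * nat => (1 <= p.2 <= Sc)%N)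
                 (fun p => preim_sys (Wst p.1 p.2)) ->
  (forall i s, (1 <= s <= Sc)%N -> forall B, measurable B ->
     (P (Wst i s @^-1` B) * P ((fun t => Sf (W 0%N t).2) @^-1` [set s])
      = P (W 0%N @^-1` B `&` (fun t => Sf (W 0%N t).2) @^-1` [set s]))%E) ->
  (* W* independent of W and of all A_n *)
  indep2 P
    (gen_sys [set p : nat * nat | (1 <= p.2 <= Sc)%N] (fun p => preim_sys (Wst p.1 p.2)))
    (gen_sys setT (fun x : nat + nat =>
       match x with inl i => preim_sys (W i) | inr n => preim_sys (A n) end)) ->
  (* conclusion, for every n and every choice of permutations sigma_{n,s} *)
  forall (n : nat) (sig : nat -> {perm 'I_n}),
    same_law P (fun t => (Xstar Sf W A Sc Wst sig t, Svec Sf W n t))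
               (fun t => (Xobs W A n t, Svec Sf W n t)) /\
    cond_indep_disc P (preim_sys (Xobs W A n))
                      (preim_sys (Xstar Sf W A Sc Wst sig))
                      (fun t => (A n t, Svec Sf W n t)).
Proof.
move=> _ _ _ mSf SfR _ mW indepW lawW mA condA _ mWst indepWst lawWst indepWstWA n sig.
split.
- exact (same_law_Xstar_Xobs SfR mSf mW mA mWst
           indepW lawW condA indepWst lawWst indepWstWA n sig).
- exact (cond_indep_Xobs_Xstar SfR mSf indepWstWA n sig).
Qed.
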